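(* Let $G$ and $H$ be nontrivial finite groups such that the cyclic graph $\Delta(G\times H)$ is connected. Then $\mathrm{diam}(\Delta(G\times H))\le 7$.
   Context: For a finite group $X$, the cyclic graph $\Delta(X)$ has vertex set $X^{\#}=X\setminus\{1\}$, and distinct vertices $x,y$ are adjacent if and only if the subgroup $\langle x,y\rangle$ is cyclic. The diameter is the maximum graph distance between two vertices. *)

From mathcomp Require Import all_boot all_fingroup all_solvable.
Set Implicit Arguments.
Unset Strict Implicit.
Unset Printing Implicit Defensive.
Local Open Scope group_scope.

Definition cyc_adj (X : finGroupType) : rel X :=
  fun x y => [&& x != 1, y != 1, x != y & cyclic <<[set x; y]>>].

Definition cyclic_graph_connected (X : finGroupType) : Prop :=
  forall x y : X, x != 1 -> y != 1 -> connect (@cyc_adj X) x y.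

Definition cyc_dist_le (X : finGroupType) (n : nat) (x y : X) : Prop :=
  exists2 s : seq X, size s <= n & path (@cyc_adj X) x s && (last x s == y).

Definition cyclic_graph_diam_le (X : finGroupType) (n : nat) : Prop :=
  forall x y : X, x != 1 -> y != 1 -> cyc_dist_le n x y.

From mathcomp Require Import all_boot all_fingroup all_solvable.
Set Implicit Arguments.
Unset Strict Implicit.
Unset Printing Implicit Defensive.
Local Open Scope group_scope.

(* Write the group as A \x B with A and B nontrivial.  If Delta is connected,
   every z of prime order p commutes with an element of some prime order
   q <> p: otherwise z \in <[y]> for every vertex y reachable from z (along an
   edge u -- v inside a cyclic <[c]>, the subgroup of order p of <[v]> is
   <[z]>), and reaching both A and B would force z \in A :&: B = 1.  Since
   'C[z] = 'C_A[z] * 'C_B[z], Cauchy's theorem lets us take that element in A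
   or in B, where it is adjacent to z.  So every vertex is within distance 2 of
   a prime-order element of A or B, and any two such elements are joined by a
   path of length at most 3 through prime-order elements of the other factor;
   when all prime-order elements of B have the same order p, the elements of
   order p of A are first left out.  Hence the bound 2 + 3 + 2. *)

Section CyclicGraph.
Variable X : finGroupType.
Implicit Types x y z w c : X.

Lemma cyc_adj_cycle x y : cyc_adj x y -> exists c, (x \in <[c]>) && (y \in <[c]>).
Proof.
case/and4P=> _ _ _ /cyclicP[c defXY]; exists c.
by rewrite -defXY !mem_gen // !inE eqxx ?orbT.
Qed.

Lemma cyc_adj_sym : symmetric (@cyc_adj X).
Proof.
move=> x y; rewrite /cyc_adj [[set y; x]]setUC [y == x]eq_sym.
by case: (x != 1); case: (y != 1).
Qed.

Lemma cyc_adj_coprime x y : x != 1 -> y != 1 -> commute x y ->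
  coprime #[x] #[y] -> cyc_adj x y.
Proof.
move=> ntx nty cxy coxy; rewrite /cyc_adj ntx nty /=; apply/andP; split.
  by apply: contraNneq ntx => eqxy; move: coxy; rewrite eqxy /coprime gcdnn order_eq1.
rewrite -[<<_>>]/(_ <*> _) -joing_idl -joing_idr cyclicY ?cycle_cyclic //.
exact: cents_cycle (commute_sym cxy).
Qed.

Lemma cyc_adj_prime x y : commute x y -> prime #[x] -> prime #[y] ->
  #[x] != #[y] -> cyc_adj x y.
Proof.
move=> cxy px py neq; apply: cyc_adj_coprime => //.
- by rewrite -order_gt1 prime_gt1.
- by rewrite -order_gt1 prime_gt1.
- by rewrite prime_coprime // dvdn_prime2.
Qed.

Lemma cyc_dist_le_refl n x : cyc_dist_le n x x.
Proof. by exists [::] => //=; rewrite eqxx. Qed.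

Lemma cyc_dist_le_adj x y : cyc_adj x y -> cyc_dist_le 1 x y.
Proof. by move=> adj; exists [:: y] => //=; rewrite adj eqxx. Qed.

Lemma cyc_dist_le_trans m n x y z :
  cyc_dist_le m x y -> cyc_dist_le n y z -> cyc_dist_le (m + n) x z.
Proof.
case=> s1 le1 /andP[p1 /eqP l1] [s2 le2 /andP[p2 /eqP l2]].
exists (s1 ++ s2); first by rewrite size_cat leq_add.
by rewrite cat_path last_cat l1 p1 p2 l2 eqxx.
Qed.

Lemma cyc_dist_le_leq m n x y : cyc_dist_le m x y -> m <= n -> cyc_dist_le n x y.
Proof. by move=> [s les pth] lemn; exists s => //; apply: leq_trans lemn. Qed.

Lemma cyc_dist_le_sym n x y : cyc_dist_le n x y -> cyc_dist_le n y x.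
Proof.
case=> s les /andP[pth /eqP <-]; exists (rev (belast x s)).
  by rewrite size_rev size_belast.
rewrite rev_path (eq_path (e' := @cyc_adj X) (fun a b => cyc_adj_sym b a)) pth.
have revs : last x s :: rev (belast x s) = rcons (rev s) x.
  by rewrite -rev_rcons -lastI rev_cons.
by have := congr1 (last x) revs; rewrite /= last_rcons => ->.
Qed.

Lemma cyc_dist_le_cycle x y : x != 1 -> y != 1 -> y \in <[x]> -> cyc_dist_le 1 x y.
Proof.
move=> ntx nty yx; have [<-|neq] := eqVneq x y; first exact: cyc_dist_le_refl.
apply: cyc_dist_le_adj; rewrite /cyc_adj ntx nty neq /=.
apply: cyclicS (cycle_cyclic x); rewrite gen_subG.
by apply/subsetP=> u /set2P[->|->]; rewrite ?cycle_id.
Qed.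

Lemma cyc_dist_le2_prime x y z : commute x y -> commute y z ->
  prime #[x] -> prime #[y] -> prime #[z] -> #[x] != #[y] -> #[y] != #[z] ->
  cyc_dist_le 2 x z.
Proof.
move=> cxy cyz px py pz nxy nyz.
by apply: (@cyc_dist_le_trans 1 1 _ y); apply: cyc_dist_le_adj; apply: cyc_adj_prime.
Qed.

Lemma cycle_prime_elt x : x != 1 -> exists2 z, z \in <[x]> & prime #[z].
Proof.
rewrite -order_gt1 => /pdiv_prime pp.
by have [z zx oz] := Cauchy pp (pdiv_dvd #[x]); exists z; rewrite ?oz.
Qed.

Lemma cyc_dist_le_prime_elt x : x != 1 -> exists2 z, prime #[z] & cyc_dist_le 1 x z.
Proof.
move=> ntx; have [z xz pz] := cycle_prime_elt ntx; exists z => //.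
by apply: cyc_dist_le_cycle; rewrite // -order_gt1 prime_gt1.
Qed.

Lemma connect_cyc_adj_mem_cycle z : prime #[z] ->
    (forall w, commute w z -> prime #[w] -> #[w] = #[z]) ->
  forall y, connect (@cyc_adj X) z y -> z \in <[y]>.
Proof.
move=> pz onlyz y /connectP[s pth ->] {y}.
suff: forall u, path (@cyc_adj X) u s -> z \in <[u]> -> z \in <[last u s]>.
  by apply; rewrite ?cycle_id.
elim: s {pth} => [|v s IHs] u //= /andP[adj pth] zu.
apply: IHs pth _; have [c /andP[uc vc]] := cyc_adj_cycle adj.
have zc : z \in <[c]> by apply: subsetP zu; rewrite cycle_subG.
have [_ ntv _ _] := and4P adj; have [q qv pq] := cycle_prime_elt ntv.
have qc : q \in <[c]> by apply: subsetP qv; rewrite cycle_subG.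
have /eqP eqzq : <[q]> :==: <[z]>.
  rewrite (eq_subG_cyclic (cycle_cyclic c)) ?cycle_subG //.
  rewrite -/#[q] -/#[z] onlyz //.
  by case/cycleP: qc => i ->; case/cycleP: zc => j ->; apply: commuteX2.
by apply: subsetP (cycle_id z); rewrite -eqzq cycle_subG.
Qed.

Lemma cyclic_graph_diam_le_core m n (S : pred X) :
    (forall x, x != 1 -> exists2 s, S s & cyc_dist_le m x s) ->
    {in S &, forall s t, cyc_dist_le n s t} ->
  cyclic_graph_diam_le X (m + n + m).
Proof.
move=> near core x y ntx nty.
have [s Ss dxs] := near x ntx; have [t St dyt] := near y nty.
exact: cyc_dist_le_trans (cyc_dist_le_trans dxs (core s t Ss St)) (cyc_dist_le_sym dyt).
Qed.

End CyclicGraph.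

Definition has_two_prime_orders (gT : finGroupType) (K : {set gT}) :=
  [exists x in K, exists y in K, [&& prime #[x], prime #[y] & #[x] != #[y]]].

Section DirectProduct.
Variables (X : finGroupType) (A B : {group X}).
Hypothesis defX : A \x B = [set: X].
Implicit Types a b w : X.

Lemma dprod_commute a b : a \in A -> b \in B -> commute a b.
Proof.
by case/dprodP: defX => _ _ cAB _ Aa Bb; apply: commute_sym; apply: (centsP cAB).
Qed.

Lemma dprod_commute_factors w a b : (w \in A) || (w \in B) -> a \in A -> b \in B ->
  commute w (a * b) -> commute w a /\ commute w b.
Proof.
move=> ABw Aa Bb cwab; case/orP: ABw => [Aw|Bw].
  have cwb := dprod_commute Aw Bb; split=> //.
  by rewrite -(mulgK b a); apply: commuteM cwab (commuteV cwb).
have cwa := commute_sym (dprod_commute Aa Bw); split=> //.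
by rewrite -(mulKg a b); apply: commuteM (commuteV cwa) cwab.
Qed.

Lemma dprod_order_mul_prime a b p : a \in A -> b \in B -> prime p ->
  #[a] = p -> #[b] = p -> #[a * b] = p.
Proof.
move=> Aa Bb pp oa ob; have [_ _ _ tiAB] := dprodP defX.
apply/(prime_nt_dvdP pp).
  rewrite order_eq1 -eq_invg_mul; apply: contraTneq Bb => <-; rewrite groupV.
  apply/negP => Ba; have: a \in A :&: B by rewrite inE Aa.
  by rewrite tiAB inE => /eqP a1; move: pp; rewrite -oa a1 order1.
by rewrite order_dvdn (expgMn _ (dprod_commute Aa Bb)) -{1}oa -ob !expg_order mulg1.
Qed.

Lemma dprod_order_factor_prime a b : a \in A -> b \in B ->
  prime #[a * b] -> b != 1 -> #[b] = #[a * b].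
Proof.
move=> Aa Bb pab ntb; have [_ _ _ tiAB] := dprodP defX.
apply/(prime_nt_dvdP pab); first by rewrite order_eq1.
have /eqP := expg_order (a * b); rewrite (expgMn _ (dprod_commute Aa Bb)).
rewrite -eq_invg_mul => /eqP abn; have: b ^+ #[a * b] \in A :&: B.
  by rewrite inE (groupX _ Bb) andbT -abn groupV groupX.
by rewrite tiAB inE order_dvdn.
Qed.

Lemma cyc_dist_le_dprod_through a1 a2 b : a1 \in A -> a2 \in A -> b \in B ->
  prime #[a1] -> prime #[b] -> prime #[a2] -> #[a1] != #[b] -> #[b] != #[a2] ->
  cyc_dist_le 2 a1 a2.
Proof.
move=> Aa1 Aa2 Bb; apply: cyc_dist_le2_prime; first exact: dprod_commute.
exact: commute_sym (dprod_commute Aa2 Bb).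
Qed.

End DirectProduct.

Section ConnectedDirectProduct.
Variables (X : finGroupType) (A B : {group X}).
Hypotheses (defX : A \x B = [set: X]) (ntA : A :!=: 1) (ntB : B :!=: 1).
Hypothesis conn : cyclic_graph_connected X.
Implicit Types a b w x z : X.

Lemma exists_commuting_prime_order_neq z : prime #[z] ->
  exists2 w, w \in 'C[z] & prime #[w] && (#[w] != #[z]).
Proof.
move=> pz; apply/exists_inP; apply: contraT; rewrite negb_exists_in => /forall_inP noW.
have onlyz w : commute w z -> prime #[w] -> #[w] = #[z].
  by move=> /cent1P Cw pw; apply/eqP; move: (noW w Cw); rewrite pw negbK.
have ntz : z != 1 by rewrite -order_gt1 prime_gt1.
have inK (K : {group X}) : K :!=: 1 -> z \in K.
  case/trivgPn=> y Ky nty; have := connect_cyc_adj_mem_cycle pz onlyz (conn ntz nty).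
  by apply: subsetP; rewrite cycle_subG.
have [_ _ _ tiAB] := dprodP defX.
have: z \in A :&: B by rewrite inE !inK.
by rewrite tiAB inE (negPf ntz).
Qed.

Lemma exists_commuting_factor_prime_elt z : prime #[z] ->
  exists w, [/\ (w \in A) || (w \in B), prime #[w], #[w] != #[z] & commute w z].
Proof.
move=> pz; have [w0 Cw0 /andP[pw0 nw0]] := exists_commuting_prime_order_neq pz.
have [_ _ _ tiAB] := dprodP defX; have [nsAX nsBX] := dprod_normal2 defX.
have tiC : 'C_A[z] :&: 'C_B[z] = 1 by apply/trivgP; rewrite -tiAB setISS ?subsetIl.
have defC : 'C_A[z] * 'C_B[z] = 'C[z].
  rewrite -!cent_set1 subcent_TImulg ?(dprodW defX) ?setTI // subsetI.
  by rewrite !(subset_trans (subsetT _) (normal_norm _)).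
have : #[w0] %| #|'C_A[z]| * #|'C_B[z]| by rewrite -TI_cardMg // defC order_dvdG.
rewrite Euclid_dvdM // => /orP[] /(Cauchy pw0)[w /setIP[Kw /cent1P cwz] ow];
  by exists w; rewrite ow Kw ?orbT.
Qed.

Lemma cyc_dist_le_near_factor_prime_elt x : x != 1 ->
  exists2 s, ((s \in A) || (s \in B)) && prime #[s] & cyc_dist_le 2 x s.
Proof.
move=> ntx; have [z pz dxz] := cyc_dist_le_prime_elt ntx.
have [w [ABw pw nw cwz]] := exists_commuting_factor_prime_elt pz.
exists w; first by rewrite ABw pw.
by apply: (cyc_dist_le_trans dxz); apply/cyc_dist_le_adj/cyc_adj_prime; rewrite // eq_sym.
Qed.

Lemma exists_prime_elt_commuting_factors a b : a \in A -> b \in B ->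
  prime #[a] -> #[b] = #[a] ->
  exists w, [/\ prime #[w], #[w] != #[a], commute a w & commute w b].
Proof.
move=> Aa Bb pa oba; have oab := dprod_order_mul_prime defX Aa Bb pa (erefl _) oba.
have [|w [ABw pw nw cw]] := @exists_commuting_factor_prime_elt (a * b).
  by rewrite oab.
have [cwa cwb] := dprod_commute_factors defX ABw Aa Bb cw.
by exists w; split; rewrite // -?oab //; apply/commute_sym.
Qed.

Lemma cyc_dist_le_dprod_across a b : a \in A -> b \in B -> prime #[a] -> prime #[b] ->
  cyc_dist_le 2 a b.
Proof.
move=> Aa Bb pa pb; have [eqab|neqab] := eqVneq #[a] #[b]; last first.
  apply: (@cyc_dist_le_leq _ 1) => //; apply/cyc_dist_le_adj/cyc_adj_prime => //.
  exact (dprod_commute defX Aa Bb).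
have [w [pw nw caw cwb]] := exists_prime_elt_commuting_factors Aa Bb pa (esym eqab).
apply: (cyc_dist_le2_prime caw cwb) => //; first by rewrite eq_sym.
by rewrite -eqab.
Qed.

Lemma cyc_dist_le_dprod_eq_order a1 a2 b : a1 \in A -> a2 \in A -> b \in B ->
  prime #[a1] -> prime #[a2] -> #[b] = #[a1] -> #[a1] != #[a2] ->
  cyc_dist_le 3 a1 a2.
Proof.
move=> Aa1 Aa2 Bb pa1 pa2 ob na12.
have [w [pw nw caw cwb]] := exists_prime_elt_commuting_factors Aa1 Bb pa1 ob.
apply: (@cyc_dist_le_trans _ 2 1 _ b).
  by apply: (cyc_dist_le2_prime caw cwb); rewrite ?ob // eq_sym.
apply/cyc_dist_le_adj/cyc_adj_prime; rewrite ?ob //.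
exact: commute_sym (dprod_commute defX Aa2 Bb).
Qed.

Lemma cyc_dist_le_dprod_two_primes a1 a2 : has_two_prime_orders B ->
  a1 \in A -> a2 \in A -> prime #[a1] -> prime #[a2] -> cyc_dist_le 3 a1 a2.
Proof.
move=> /exists_inP[b1 Bb1 /exists_inP[b2 Bb2 /and3P[pb1 pb2 nb12]]] Aa1 Aa2 pa1 pa2.
suff via b : b \in B -> prime #[b] -> #[b] != #[a1] -> cyc_dist_le 3 a1 a2.
  have [e1|] := eqVneq #[b1] #[a1]; last exact: via.
  by apply: (via b2) => //; rewrite -e1 eq_sym.
move=> Bb pb nb1; have [e2|nb2] := eqVneq #[b] #[a2].
  by apply/cyc_dist_le_sym/(cyc_dist_le_dprod_eq_order Aa2 Aa1 Bb); rewrite // -e2.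
apply: (@cyc_dist_le_leq _ 2) => //.
by apply: (cyc_dist_le_dprod_through defX Aa1 Aa2 Bb); rewrite // eq_sym.
Qed.

Lemma cyc_dist_le_near_one_prime p : {in B, forall b, prime #[b] -> #[b] = p} ->
    forall x, x != 1 ->
  exists2 s, ((s \in A) && (#[s] != p) || (s \in B)) && prime #[s] & cyc_dist_le 2 x s.
Proof.
move=> pB x ntx; have [z pz dxz] := cyc_dist_le_prime_elt ntx.
have [Azp|ozp] : (z \in A) && (#[z] != p) \/ #[z] = p.
- have /mulsgP[a b Aa Bb defz] : z \in A * B by rewrite (dprodW defX) inE.
  have [b1|ntb] := eqVneq b 1.
    have Az : z \in A by rewrite defz b1 mulg1.
    by have [nzp|/negPn/eqP] := boolP (#[z] != p); [left; rewrite Az | right].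
  have ob : #[b] = #[z] by rewrite defz (dprod_order_factor_prime defX Aa Bb) // -defz.
  by right; rewrite -ob pB // ob.
- by exists z; rewrite ?Azp ?pz //; apply: cyc_dist_le_leq dxz _.
have [w [ABw pw nw cwz]] := exists_commuting_factor_prime_elt pz.
exists w; first by case/orP: ABw => ->; rewrite pw -?ozp ?nw ?orbT.
apply: (cyc_dist_le_trans dxz); apply/cyc_dist_le_adj/cyc_adj_prime => //.
by rewrite eq_sym.
Qed.

Lemma cyclic_graph_dprod_diam_le7_one_prime : ~~ has_two_prime_orders B ->
  cyclic_graph_diam_le X 7.
Proof.
move=> oneB; have [y By nty] := trivgPn _ ntB; have [b0 yb0 pb0] := cycle_prime_elt nty.
have Bb0 : b0 \in B by apply: subsetP yb0; rewrite cycle_subG.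
have pB : {in B, forall b, prime #[b] -> #[b] = #[b0]}.
  move=> b Bb pb; apply/eqP; apply: contraNT oneB => nbb0.
  by apply/exists_inP; exists b => //; apply/exists_inP; exists b0; rewrite ?pb ?pb0.
have [a0 [ABa0 pa0 na0 _]] := exists_commuting_factor_prime_elt pb0.
have Aa0 : a0 \in A by case/orP: ABa0 => // /pB/(_ pa0)/eqP; rewrite (negPf na0).
pose S x := ((x \in A) && (#[x] != #[b0]) || (x \in B)) && prime #[x].
apply: (@cyclic_graph_diam_le_core _ 2 3 S (cyc_dist_le_near_one_prime pB)).
move=> g h /andP[/orP[/andP[Ag ng]|Bg] pg] /andP[/orP[/andP[Ah nh]|Bh] ph].
- apply: cyc_dist_le_leq (cyc_dist_le_dprod_through defX Ag Ah Bb0 pg pb0 ph _ _) _ => //.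
  by rewrite eq_sym.
- exact: cyc_dist_le_leq (cyc_dist_le_dprod_across Ag Bh pg ph) _.
- exact: cyc_dist_le_sym (cyc_dist_le_leq (cyc_dist_le_dprod_across Ah Bg ph pg) _).
- have defXC : B \x A = [set: X] by rewrite dprodC.
  have dgh := cyc_dist_le_dprod_through defXC Bg Bh Aa0 pg pa0 ph.
  apply: cyc_dist_le_leq (dgh _ _) _ => //; first by rewrite (pB g) // eq_sym.
  by rewrite (pB h).
Qed.

End ConnectedDirectProduct.

Theorem cyclic_graph_dprod_diam_le7 (X : finGroupType) (A B : {group X}) :
    A \x B = [set: X] -> A :!=: 1 -> B :!=: 1 -> cyclic_graph_connected X ->
  cyclic_graph_diam_le X 7.
Proof.
move=> defX ntA ntB conn; have defXC : B \x A = [set: X] by rewrite dprodC.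
have [twoB|] := boolP (has_two_prime_orders B);
  last exact: cyclic_graph_dprod_diam_le7_one_prime defX ntA ntB conn.
have [twoA|] := boolP (has_two_prime_orders A);
  last exact: cyclic_graph_dprod_diam_le7_one_prime defXC ntB ntA conn.
pose S x := ((x \in A) || (x \in B)) && prime #[x].
have near := cyc_dist_le_near_factor_prime_elt defX ntA ntB conn.
apply: (@cyclic_graph_diam_le_core _ 2 3 S near).
move=> g h /andP[/orP[Ag|Bg] pg] /andP[/orP[Ah|Bh] ph].
- exact: cyc_dist_le_dprod_two_primes defX ntA ntB conn _ _ twoB Ag Ah pg ph.
- exact: cyc_dist_le_leq (cyc_dist_le_dprod_across defX ntA ntB conn Ag Bh pg ph) _.
- apply: cyc_dist_le_sym.
  exact: cyc_dist_le_leq (cyc_dist_le_dprod_across defX ntA ntB conn Ah Bg ph pg) _.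
- exact: cyc_dist_le_dprod_two_primes defXC ntB ntA conn _ _ twoA Bg Bh pg ph.
Qed.

Theorem theorem4p2 (G H : finGroupType) :
  1 < #|G| -> 1 < #|H| ->
  cyclic_graph_connected (G * H)%type ->
  cyclic_graph_diam_le (G * H)%type 7.
Proof.
move=> ntG ntH.
have defX : setX [set: G] 1 \x setX 1 [set: H] = [set: G * H].
  by rewrite (setX_dprod [set: G]%G [set: H]%G); apply/setP=> -[g h]; rewrite !inE.
apply: cyclic_graph_dprod_diam_le7 defX _ _.
- by rewrite -cardG_gt1 -(card_isog (isog_setX1 H _)) cardsT.
- by rewrite -cardG_gt1 -(card_isog (isog_set1X G _)) cardsT.
Qed.
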